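(* Let $(C_\bullet,\partial^C_\bullet)$ be a chain complex in which each $C_n$ is the free abelian group on a finite set $K_n$ (nonempty for only finitely many $n$), and $(G_\bullet,\partial^G_\bullet)$ a chain complex of finite abelian groups, with $\mathrm{hom}^p$, $\mathrm{hom}_p$, $d^p$, $d_p$, $\chi$, $\mathcal H$, $P^\alpha$, $Q_{\hat\beta}$ as in the context. For $\hat\rho\in\mathrm{hom}_{-1}$ and $\omega\in\mathrm{hom}^1$ define the fake-gauge and fake-holonomy operators on $\mathcal H$: $$A_{\hat\rho}=\frac{1}{|\mathrm{hom}^{-1}|}\sum_{\alpha\in\mathrm{hom}^{-1}}\overline{\chi_{\hat\rho}(\alpha)}\,P^{d^{-1}\alpha},\qquad B^{\omega}=\frac{1}{|\mathrm{hom}_{1}|}\sum_{\hat\beta\in\mathrm{hom}_{1}}\overline{\chi_{\hat\beta}(\omega)}\,Q_{d_1\hat\beta}.$$ Then for all $\hat\rho,\hat\rho'\in\mathrm{hom}_{-1}$ and $\omega,\omega'\in\mathrm{hom}^1$: (1) $A_{\hat\rho}B^\omega=B^\omega A_{\hat\rho}$; (2) $A_{\hat\rho}^\dagger=A_{\hat\rho}$ and $(B^\omega)^\dagger=B^\omega$; (3) $A_{\hat\rho}A_{\hat\rho'}=\delta(\hat\rho,\hat\rho')A_{\hat\rho'}$ and $B^\omega B^{\omega'}=\delta(\omega,\omega')B^{\omega'}$; (4) $\sum_{\hat\rho\in\mathrm{hom}_{-1}}A_{\hat\rho}=\mathbb 1_{\mathcal H}$ and $\sum_{\omega\in\mathrm{hom}^1}B^\omega=\mathbb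 1_{\mathcal H}$. In particular, the $A_{\hat\rho}$ and $B^\omega$ are mutually commuting orthogonal projectors.
   Context: $\mathrm{hom}^p=\bigoplus_n\mathrm{Hom}(C_n,G_{n-p})$, $\mathrm{hom}_p=\bigoplus_n\mathrm{Hom}(C_n,\hat G_{n-p})$ with $\hat G_m=\mathrm{Hom}(G_m,U(1))$, abelian groups under pointwise addition. The pairing $\chi_{\hat\rho}(\omega)=\prod_n\prod_{x\in K_n}\hat\rho_n(x)(\omega_n(x))\in U(1)$ for $\hat\rho\in\mathrm{hom}_p,\ \omega\in\mathrm{hom}^p$ is nondegenerate. $d^p:\mathrm{hom}^p\to\mathrm{hom}^{p+1}$ is $(d^p\omega)_n=\omega_{n-1}\circ\partial^C_n-(-1)^p\,\partial^G_{n-p}\circ\omega_n$, and $d_{p+1}:\mathrm{hom}_{p+1}\to\mathrm{hom}_p$ is the unique homomorphism with $\chi_{d_{p+1}\hat\nu}(\omega)=\chi_{\hat\nu}(d^p\omega)$. $\mathcal H$ is the Hilbert space with orthonormal basis $\{|\omega\rangle:\omega\in\mathrm{hom}^0\}$; $P^\alpha|\omega\rangle=|\omega+\alpha\rangle$ for $\alpha\in\mathrm{hom}^0$ and $Q_{\hat\beta}|\omega\rangle=\chi_{\hat\beta}(\omega)|\omega\rangle$ for $\hat\beta\in\mathrm{hom}_0$. $\delta$ is the Kronecker delta and $\dagger$ the Hilbert-space adjoint. *)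

From HB Require Import structures.
From mathcomp Require Import all_boot all_order all_algebra.
From mathcomp Require Import algC.
Set Implicit Arguments. Unset Strict Implicit. Unset Printing Implicit Defensive.
Import Order.TTheory GRing.Theory Num.Theory.
Local Open Scope ring_scope.

(* Encoding:
   - [Cell] is the finite disjoint union of the sets K_n; [deg x] is the degree n
     with x in K_n.  C_n is the free abelian group on {x | deg x = n}.
   - [bdC x y] is the integer coefficient of y in the boundary of x.
   - [G n] are finite abelian groups, [dG n : G n -> G (n-1)] the boundaries.
   - [Ghat m] is a finite type together with [chr : Ghat m -> G m -> algC]
     identifying it with Hom(G_m, U(1)) (the dual group).                  *)

Section Fake.
Variable Cell : finType.
Variable deg : Cell -> int.
Variable bdC : Cell -> Cell -> int.
Variable G : int -> finZmodType.
Variable dG : forall n : int, {additive G n -> G (n - 1)}.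
Variable Ghat : int -> finType.
Variable chr : forall m : int, Ghat m -> G m -> algC.

Definition bdC_graded := forall x y, bdC x y != 0 -> deg y = deg x - 1.
Definition bdC_sq0 := forall x z, \sum_(y : Cell) bdC x y * bdC y z = 0.
Definition dG_sq0 := forall (n : int) (a : G n), dG (n - 1) (dG n a) = 0.

Definition is_U1char (m : int) (f : G m -> algC) :=
  (forall a b, f (a + b) = f a * f b) /\ (forall a, `|f a| = 1).

Definition is_dual :=
  forall m : int,
    (forall g : Ghat m, is_U1char (chr g)) /\
    (forall g1 g2 : Ghat m, (forall a, chr g1 a = chr g2 a) -> g1 = g2) /\
    (forall f : G m -> algC, is_U1char f -> exists g : Ghat m, forall a, chr g a = f a).

(* homu^p = (+)_n Hom(C_n, G_{n-p}) = functions on cells x |-> G_(deg x - p) *)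
Definition homu (p : int) := {dffun forall x : Cell, G (deg x - p)}.
(* hom_p = (+)_n Hom(C_n, Ghat_{n-p}) *)
Definition homl (p : int) := {dffun forall x : Cell, Ghat (deg x - p)}.

Definition addh (p : int) (a b : homu p) : homu p := [ffun x => a x + b x].

Definition castG (m1 m2 : int) (a : G m1) : G m2 :=
  match m1 =P m2 with
  | ReflectT e => eq_rect m1 (fun m => G m : Type) a m2 e
  | ReflectF _ => 0
  end.

(* coboundary d : homu^p -> homu^q (used with q = p + 1):
   (d w)_n = w_{n-1} o bd^C_n - (-1)^p bd^G_{n-p} o w_n *)
Definition dcob (p q : int) (w : homu p) : homu q :=
  [ffun x => \sum_(y : Cell) (@castG (deg y - p) (deg x - q) (w y) *~ bdC x y)
             - (@castG (deg x - p - 1) (deg x - q) (dG (deg x - p) (w x)) *~ ((-1 : int) ^ p))].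

Definition chi (p : int) (r : homl p) (w : homu p) : algC :=
  \prod_(x : Cell) chr (r x) (w x).

(* Hilbert space with orthonormal basis homu^0; operators are matrices
   indexed by an enumeration of homu^0 *)
Definition dimH := #|{: homu 0}|.
Definition Op := 'M[algC]_dimH.
Definition bas (i : 'I_dimH) : homu 0 := enum_val i.

Definition adj (M : Op) : Op := (map_mx (fun z : algC => z^*) M)^T.

(* P^alpha |omega> = |omega + alpha> *)
Definition Pop (a : homu 0) : Op := \matrix_(i, j) ((bas i == addh (bas j) a)%:R).
(* Q_beta |omega> = chi_beta(omega) |omega> *)
Definition Qop (b : homl 0) : Op := \matrix_(i, j) ((i == j)%:R * chi b (bas j)).

Definition Aop (r : homl (-1)) : Op :=
  (#|{: homu (-1)}|%:R)^-1 *: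
    \sum_(a : homu (-1)) ((chi r a)^* *: Pop (@dcob (-1) 0 a)).

(* fake-holonomy operator; d1 is the dual map d_1 : hom_1 -> hom_0 *)
Definition Bop (d1 : homl 1 -> homl 0) (w : homu 1) : Op :=
  (#|{: homl 1}|%:R)^-1 *:
    \sum_(b : homl 1) ((chi b w)^* *: Qop (d1 b)).

End Fake.

(* The operators P^{d^{-1} alpha} form a unitary representation of the finite
   abelian group hom^{-1}, whose dual group is hom_{-1} (the dual of a finite
   product is the product of the duals), and A_rho is the Fourier projector of
   this representation onto the character chi_rho; so the A_rho are selfadjoint,
   orthogonal and sum to 1 by the orthogonality relations of characters.  Column
   orthogonality for hom^1 together with d_1 = (d^0)^* shows that B^omega is the
   multiplication operator by the indicator of d^0 u = omega, which gives the
   same three properties for B.  Finally d^0 d^{-1} = 0 makes this indicator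
   invariant under the shifts by d^{-1} alpha, so A_rho and B^omega commute. *)

From Pilot Require Import Defs.
From HB Require Import structures.
From mathcomp Require Import all_boot all_order all_algebra.
From mathcomp Require Import algC fingroup classfun character ring zify.
Import GRing.Theory Num.Theory FinRing.Theory.
Local Open Scope ring_scope.
Set Implicit Arguments. Unset Strict Implicit. Unset Printing Implicit Defensive.

Definition U1char (V : zmodType) (f : V -> algC) : Prop :=
  (forall u v, f (u + v) = f u * f v) /\ (forall v, `|f v| = 1).

(* [is_dual chr] unfolds to [forall m, dual_pairing (@chr m)]. *)
Definition dual_pairing (V : zmodType) (H : Type) (c : H -> V -> algC) : Prop :=
  (forall h, U1char (c h)) /\
  (forall h1 h2, (forall v, c h1 v = c h2 v) -> h1 = h2) /\
  (forall f, U1char f -> exists h, forall v, c h v = f v).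

Section U1Char.
Variables (V : zmodType) (f : V -> algC).
Hypothesis f_char : U1char f.

Lemma U1char_neq0 v : f v != 0.
Proof. by rewrite -normr_eq0 f_char.2 oner_eq0. Qed.

Lemma U1char_mul_conj v : f v * (f v)^* = 1.
Proof. by rewrite -normCK f_char.2 expr1n. Qed.

Lemma U1char0 : f 0 = 1.
Proof. by apply: (mulfI (U1char_neq0 0)); rewrite -f_char.1 addr0 mulr1. Qed.

Lemma U1charN v : f (- v) = (f v)^*.
Proof.
by apply: (mulfI (U1char_neq0 v)); rewrite -f_char.1 subrr U1char0 U1char_mul_conj.
Qed.
End U1Char.

Lemma fixed_by_neq1_eq0 (R : idomainType) (z s : R) : z != 1 -> s = z * s -> s = 0.
Proof.
move=> z_neq1 s_fixed; have : (1 - z) * s = 0 by rewrite mulrBl mul1r -s_fixed subrr.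
by move/eqP; rewrite mulf_eq0 subr_eq0 eq_sym (negbTE z_neq1) => /eqP.
Qed.

Lemma sum_mul_morph_eq0 (V : finZmodType) (R : idomainType) (f : V -> R) (v0 : V) :
  (forall u v, f (u + v) = f u * f v) -> f v0 != 1 -> \sum_v f v = 0.
Proof.
move=> fD /fixed_by_neq1_eq0; apply.
by rewrite {1}(reindex_inj (addIr v0)) mulr_sumr; apply: eq_bigr => v _; rewrite fD mulrC.
Qed.

Lemma card_zmod_neq0 (V : finZmodType) : (#|{: V}|%:R : algC) != 0.
Proof. by rewrite pnatr_eq0 -lt0n; apply/card_gt0P; exists 0. Qed.

Lemma U1char_separates (V : finZmodType) (a : V) :
  a != 0 -> exists2 f : V -> algC, U1char f & f a != 1.
Proof.
(* The irreducible characters of an abelian group are linear, and their kernels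
   intersect trivially. *)
move=> a_neq0; pose chi i := 'chi[[set: V]%G]_i.
have : a \notin \bigcap_i cfker (chi i) by rewrite TI_cfker_irr inE.
case: (pickP (fun i => a \notin cfker (chi i))) => [i a_ker _ | none]; last first.
  by case/negP; apply/bigcapP => i _; move/negbFE: (none i).
have lin : chi i \is a linear_char by apply/char_abelianP/zmod_abelian.
exists (fun v => chi i v); first by split => [u v|v]; rewrite ?lin_charM ?normC_lin_char ?inE.
by move: a_ker; rewrite cfkerEirr inE lin_char1.
Qed.

Section DualPairing.
Variables (V : finZmodType) (H : finType) (c : H -> V -> algC).
Hypothesis c_dual : dual_pairing c.

Let c_char h : U1char (c h) := c_dual.1 h.

Lemma dual_pairingN h v : c h (- v) = (c h v)^*.
Proof. exact: U1charN. Qed.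

Lemma sum_dual_pairing_conj h h' :
  \sum_v c h v * (c h' v)^* = (#|V| * (h == h'))%:R.
Proof.
have [<-|neq_hh'] := eqVneq h h'.
  by rewrite muln1 (eq_bigr (fun=> 1)) ?sumr_const // => v _; apply: U1char_mul_conj.
have [v0 neq_v0] : exists v0, c h v0 != c h' v0.
  apply/existsP; apply: contraR neq_hh' => /existsPn c_eq.
  by apply/eqP/c_dual.2.1 => v; apply/eqP/negPn.
rewrite muln0; apply: (sum_mul_morph_eq0 (v0 := v0)) => [u v|].
  by rewrite (c_char h).1 (c_char h').1 rmorphM /=; ring.
apply: contra neq_v0 => /eqP eq1; apply/eqP.
by rewrite -[c h v0]mulr1 -(U1char_mul_conj (c_char h') v0) mulrCA eq1 mulr1.
Qed.

Lemma sum_dual_pairing v : \sum_h c h v = (#|H| * (v == 0))%:R.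
Proof.
have [->|v_neq0] := eqVneq v 0.
  by rewrite muln1 (eq_bigr (fun=> 1)) ?sumr_const // => h _; apply: U1char0.
have [f f_char fv] := U1char_separates v_neq0.
have [h0 h0E] := c_dual.2.2 f f_char.
(* Multiplying by c h0 permutes the characters c h and scales the sum by c h0 v != 1. *)
have c_shift h : exists h1, [forall u, c h1 u == c h u * c h0 u].
  have [|h1 h1E] := c_dual.2.2 (fun u => c h u * c h0 u).
    split=> [u1 u2|u]; first by rewrite (c_char h).1 (c_char h0).1; ring.
    by rewrite normrM (c_char h).2 (c_char h0).2 mulr1.
  by exists h1; apply/forallP => u; rewrite h1E.
pose shift h := xchoose (c_shift h).
have shiftE h u : c (shift h) u = c h u * c h0 u.
  exact/eqP/(forallP (xchooseP (c_shift h))).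
have shift_inj : injective shift.
  move=> h1 h2 eq12; apply: c_dual.2.1 => u.
  by apply: (mulIf (U1char_neq0 (c_char h0) u)); rewrite -!shiftE eq12.
rewrite muln0; apply: (@fixed_by_neq1_eq0 _ (c h0 v)); first by rewrite h0E.
by rewrite {1}(reindex_inj shift_inj) mulr_sumr; apply: eq_bigr => h _; rewrite shiftE mulrC.
Qed.

Lemma card_dual_pairing : #|H| = #|V|.
Proof.
have [h1 h1E] : exists h1, forall v, c h1 v = 1.
  by apply: c_dual.2.2; split=> [u v|v]; rewrite ?mulr1 ?normr1.
have sum_c h : \sum_v c h v = (#|V| * (h == h1))%:R.
  by rewrite -sum_dual_pairing_conj; apply: eq_bigr => v _; rewrite h1E rmorph1 mulr1.
apply/eqP; rewrite -(eqr_nat algC).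
have <- : \sum_h \sum_v c h v = #|V|%:R.
  rewrite (eq_bigr _ (fun h _ => sum_c h)) (bigD1 h1) //= eqxx muln1.
  by rewrite big1 ?addr0 // => h /negbTE->; rewrite muln0.
rewrite exchange_big (eq_bigr _ (fun v _ => sum_dual_pairing v)) (bigD1 0) //=.
by rewrite eqxx muln1 big1 ?addr0 // => v /negbTE->; rewrite muln0.
Qed.
End DualPairing.

Section CastG.
Variables (G : int -> finZmodType) (m1 m2 : int).

Lemma castG_id (a : G m1) : castG m1 a = a.
Proof. by rewrite /castG; case: eqP => // e; rewrite (eq_irrelevance e (erefl m1)). Qed.

Fact castG_is_zmod_morphism : zmod_morphism (@castG G m1 m2).
Proof. by move=> a b; rewrite /castG; case: eqP => [e|_]; [subst m2 | rewrite subr0]. Qed.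

HB.instance Definition _ :=
  GRing.isZmodMorphism.Build (G m1) (G m2) (@castG G m1 m2) castG_is_zmod_morphism.
End CastG.

Lemma castG_comp (G : int -> finZmodType) m1 m2 m3 (a : G m1) :
  m1 = m2 -> castG m3 (castG m2 a) = castG m3 a.
Proof. by move=> e; subst m2; rewrite castG_id. Qed.

Section HomGroup.
Variables (Cell : finType) (deg : Cell -> int) (G : int -> finZmodType) (p : int).
Local Notation hom := (homu deg G p).

Definition zeroh : hom := [ffun x => 0].
Definition opph (a : hom) : hom := [ffun x => - a x].

Fact addhA : associative (@addh _ deg G p).
Proof. by move=> a b c; apply/ffunP => x; rewrite !ffunE addrA. Qed.
Fact addhC : commutative (@addh _ deg G p).
Proof. by move=> a b; apply/ffunP => x; rewrite !ffunE; apply: addrC. Qed.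
Fact add0h : left_id zeroh (@addh _ deg G p).
Proof. by move=> a; apply/ffunP => x; rewrite !ffunE add0r. Qed.
Fact addNh : left_inverse zeroh opph (@addh _ deg G p).
Proof. by move=> a; apply/ffunP => x; rewrite !ffunE addNr. Qed.

HB.instance Definition _ := Finite.on hom.
HB.instance Definition _ := GRing.isZmodule.Build hom addhA addhC add0h addNh.

Lemma addhE (u v : hom) : addh u v = u + v. Proof. by []. Qed.
Lemma homu0E x : (0 : hom) x = 0. Proof. exact: ffunE. Qed.
Lemma homuDE (u v : hom) x : (u + v) x = u x + v x. Proof. exact: ffunE. Qed.
Lemma homuNE (u : hom) x : (- u) x = - u x. Proof. exact: ffunE. Qed.

Lemma homu_sumE (I : finType) (F : I -> hom) x : (\sum_i F i) x = \sum_i F i x.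
Proof. by elim/big_rec2: _ => [|i a u _ <-]; rewrite ?homu0E ?homuDE. Qed.

Definition single (x : Cell) (a : G (deg x - p)) : hom :=
  [ffun y => if y == x then castG (deg y - p) a else 0].

Lemma singleD x : {morph @single x : a b / a + b}.
Proof.
by move=> a b; apply/ffunP => y; rewrite homuDE !ffunE; case: eqP => _; rewrite ?raddfD ?addr0.
Qed.

Lemma sum_single (u : hom) : \sum_x single (u x) = u.
Proof.
apply/ffunP => y; rewrite homu_sumE (bigD1 y) //= big1 => [|x /negbTE neq_x].
  by rewrite ffunE eqxx castG_id addr0.
by rewrite ffunE eq_sym neq_x.
Qed.

Variables (Ghat : int -> finType) (chr : forall m, Ghat m -> G m -> algC).
Hypothesis chr_dual : is_dual chr.
Local Notation chi := (@chi _ deg G Ghat chr p).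

Let chr_char m (g : Ghat m) : U1char (chr g) := (chr_dual m).1 g.

Lemma chi_single (r : homl deg Ghat p) x (a : G (deg x - p)) : chi r (single a) = chr (r x) a.
Proof.
rewrite /chi (bigD1 x) //= big1 => [|y /negbTE neq_y]; first by rewrite ffunE eqxx castG_id mulr1.
by rewrite ffunE neq_y (U1char0 (chr_char _)).
Qed.

Lemma dual_pairing_chi : dual_pairing chi.
Proof.
split; [|split].
- move=> r; split=> [u v|v].
    by rewrite /chi -big_split; apply: eq_bigr => x _; rewrite homuDE (chr_char _).1.
  by rewrite /chi normr_prod big1 // => x _; rewrite (chr_char _).2.
- move=> r1 r2 eq12; apply/ffunP => x; apply: (chr_dual _).2.1 => a.
  by rewrite -!chi_single eq12.
(* A character f of the product is the product of its restrictions to the factors. *)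
move=> f [fD fN].
have chr_onto x : exists g : Ghat (deg x - p), [forall a, chr g a == f (single a)].
  have [|g gE] := (chr_dual _).2.2 (fun a : G (deg x - p) => f (single a)).
    by split=> [a b|a]; rewrite ?singleD ?fD ?fN.
  by exists g; apply/forallP => a; rewrite gE.
exists [ffun x => xchoose (chr_onto x)] => v.
rewrite -[in RHS](sum_single v) (big_morph f fD (U1char0 (conj fD fN))).
apply: eq_bigr => x _; rewrite ffunE.
exact/eqP/(forallP (xchooseP (chr_onto x))).
Qed.
End HomGroup.

Section Coboundary.
Variables (Cell : finType) (deg : Cell -> int) (bdC : Cell -> Cell -> int).
Variables (G : int -> finZmodType) (dG : forall n : int, {additive G n -> G (n - 1)}).
Local Notation dcob p q := (@Defs.dcob _ deg bdC G dG p q).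

Lemma dcobB p q : zmod_morphism (dcob p q).
Proof.
move=> u v; apply/ffunP => x; rewrite !homuDE !homuNE !ffunE.
under eq_bigr do rewrite homuDE homuNE raddfB mulrzBl.
by rewrite sumrB !raddfB /= mulrzBl !opprD !opprK addrACA.
Qed.

Lemma dcob0 p q : dcob p q 0 = 0.
Proof. by rewrite -(subrr 0) dcobB subrr. Qed.

Lemma dcobN p q (u : homu deg G p) : dcob p q (- u) = - dcob p q u.
Proof. by rewrite -sub0r dcobB dcob0 sub0r. Qed.

Lemma dcobD p q (u v : homu deg G p) : dcob p q (u + v) = dcob p q u + dcob p q v.
Proof. by rewrite -{1}[v]opprK dcobB dcobN opprK. Qed.

Lemma castG_castG_mulrz m1 m2 m3 (a : G m1) (k : int) :
  (k != 0 -> m1 = m2) -> castG m3 (castG m2 a) *~ k = castG m3 a *~ k.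
Proof.
by move=> e; have [->|/e e12] := eqVneq k 0; rewrite ?mulr0z // castG_comp.
Qed.

Lemma castG_dG_mulrz m1 m2 m3 (a : G m1) (k : int) :
  (k != 0 -> m1 = m2) -> castG m3 (dG m2 (castG m2 a)) *~ k = castG m3 (dG m1 a) *~ k.
Proof.
by move=> e; have [->|/e e12] := eqVneq k 0; [rewrite !mulr0z | subst; rewrite castG_id].
Qed.

Hypotheses (bdC_gr : bdC_graded deg bdC) (bdC_sq : bdC_sq0 bdC) (dG_sq : dG_sq0 dG).

(* In (d d a)_x the bdC bdC and dG dG terms vanish, and the two mixed terms
   cancel because (-1)^(p+1) = - (-1)^p. *)
Lemma dcob_sq0 p (a : homu deg G p) : dcob (p + 1) (p + 1 + 1) (dcob p (p + 1) a) = 0.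
Proof.
apply/ffunP => x; rewrite homu0E !ffunE; set r := deg x - (p + 1 + 1).
have sgnS : (-1 : int) ^ (p + 1) = - (-1) ^ p by rewrite exprzDr ?unitrN1 // expr1z mulrN1.
have shift_deg n : n - p - 1 = n - (p + 1) by lia.
have bd_deg y z : bdC y z != 0 -> deg z - p = deg y - (p + 1) by move/bdC_gr->; lia.
have bdC_bdC : \sum_i (\sum_y castG r (castG (deg i - (p + 1)) (a y) *~ bdC i y)) *~ bdC x i = 0.
  under eq_bigr => i _.
    rewrite mulrz_suml.
    under eq_bigr => y _ do rewrite raddfMz /= (castG_castG_mulrz _ _ (@bd_deg i y)) -mulrzA.
    over.
  rewrite exchange_big big1 // => y _.
  by rewrite -mulrz_sumr (eq_bigr _ (fun i _ => mulrC _ _)) bdC_sq mulr0z.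
under eq_bigr => i _ do rewrite ffunE raddfB raddf_sum /= mulrzBl.
rewrite sumrB bdC_bdC sub0r -opprD; apply/eqP; rewrite oppr_eq0; apply/eqP.
under eq_bigr => i _ do rewrite raddfMz /= (castG_castG_mulrz _ _ (fun _ => shift_deg (deg i))).
rewrite !raddfB !raddf_sum /= !raddfMz /= mulNrz (castG_dG_mulrz _ _ (fun _ => shift_deg (deg x))).
rewrite dG_sq raddf0 mul0rz subr0.
rewrite sgnS mulrNz mulrz_suml -sumrB big1 // => i _.
rewrite (raddfMz (dG _)) (raddfMz (@castG G _ r)) /= (castG_dG_mulrz _ _ (@bd_deg x i)).
by rewrite mulrzAC subrr.
Qed.
End Coboundary.

Section FourierProjector.
Variables (V : finZmodType) (H : finType) (c : H -> V -> algC).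
Hypothesis c_dual : dual_pairing c.
Variables (n : nat) (rho : V -> 'M[algC]_n).
Hypotheses (rhoD : forall a b, rho (a + b) = rho a *m rho b) (rho0 : rho 0 = 1%:M).

Definition fourier_proj (h : H) : 'M[algC]_n :=
  (#|{: V}|%:R)^-1 *: \sum_a ((c h a)^* *: rho a).

Lemma fourier_projM h h' : fourier_proj h *m fourier_proj h' = (h == h')%:R *: fourier_proj h'.
Proof.
rewrite /fourier_proj -scalemxAl -scalemxAr scalerA mulmx_suml.
under eq_bigr => a _.
  rewrite mulmx_sumr (reindex_inj (addIr (- a))).
  under eq_bigr => g _ do rewrite -scalemxAl -scalemxAr scalerA -rhoD subrKC.
  over.
have inner g : \sum_a (c h a)^* * (c h' (g - a))^* = (#|{: V}| * (h == h'))%:R * (c h' g)^*.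
  rewrite (eq_bigr (fun a => (c h' g)^* * (c h' a * (c h a)^*))) => [|a _].
    by rewrite -mulr_sumr sum_dual_pairing_conj // eq_sym mulrC.
  by rewrite (c_dual.1 h').1 dual_pairingN // rmorphM /= conjCK; ring.
rewrite exchange_big /=.
under eq_bigr => g _ do rewrite -scaler_suml inner -scalerA.
rewrite -scaler_sumr !scalerA; congr (_ *: _).
by case: (h == h'); rewrite ?muln0 ?mulr0 ?mul0r // muln1 mulfVK ?card_zmod_neq0 // mul1r.
Qed.

Lemma sum_fourier_proj : \sum_h fourier_proj h = 1%:M.
Proof.
rewrite -scaler_sumr exchange_big /=.
under eq_bigr => a _ do rewrite -scaler_suml -rmorph_sum sum_dual_pairing // rmorph_nat.
rewrite (bigD1 0) //= big1 => [|a /negbTE->]; last by rewrite muln0 scale0r.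
by rewrite eqxx muln1 (card_dual_pairing c_dual) rho0 addr0 scalerA mulVf ?card_zmod_neq0 ?scale1r.
Qed.

Lemma fourier_proj_comm h M :
  (forall a, rho a *m M = M *m rho a) -> fourier_proj h *m M = M *m fourier_proj h.
Proof.
move=> rhoC; rewrite -scalemxAl -scalemxAr mulmx_suml mulmx_sumr; congr (_ *: _).
by apply: eq_bigr => a _; rewrite -scalemxAl -scalemxAr rhoC.
Qed.

Lemma fourier_proj_adj h :
  (forall a, (map_mx Num.conj (rho a))^T = rho (- a)) ->
  (map_mx Num.conj (fourier_proj h))^T = fourier_proj h.
Proof.
move=> rho_adj; rewrite map_mxZ raddf_sum linearZ raddf_sum /= fmorphV /= conjC_nat.
congr (_ *: _); rewrite (reindex_inj oppr_inj); apply: eq_bigr => a _.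
by rewrite map_mxZ linearZ /= rho_adj opprK dual_pairingN // conjCK.
Qed.
End FourierProjector.

Section Operators.
Variables (Cell : finType) (deg : Cell -> int) (G : int -> finZmodType).
Local Notation Op := (Op deg G).
Local Notation homu0 := (homu deg G 0).
Local Notation bas := (@bas _ deg G).

Lemma bas_inj : injective bas. Proof. exact: enum_val_inj. Qed.

Lemma bas_rank u : bas (enum_rank u) = u. Proof. exact: enum_rankK. Qed.

Lemma PopM (a b : homu0) : Pop a *m Pop b = Pop (a + b) :> Op.
Proof.
apply/matrixP => i j; rewrite !mxE (bigD1 (enum_rank (bas j + b))) //= big1 => [|k].
  by rewrite !mxE bas_rank !addhE eqxx mulr1 addr0 [a + b]addrC addrA.
by rewrite !mxE -(inj_eq bas_inj) bas_rank !addhE => /negbTE->; rewrite mulr0.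
Qed.

Lemma Pop0 : Pop 0 = 1%:M :> Op.
Proof. by apply/matrixP => i j; rewrite !mxE addhE addr0 (inj_eq bas_inj). Qed.

Lemma adj_Pop (a : homu0) : adj (Pop a) = Pop (- a).
Proof.
apply/matrixP => i j; rewrite !mxE conjC_nat !addhE.
by congr (nat_of_bool _)%:R; apply/eqP/eqP => ->; rewrite ?addrK ?subrK.
Qed.

Definition mulop (f : homu0 -> algC) : Op := diag_mx (\row_j f (bas j)).

Lemma eq_mulop f g : f =1 g -> mulop f = mulop g.
Proof. by move=> eq_fg; congr diag_mx; apply/rowP => j; rewrite !mxE. Qed.

Lemma mulopM f g : mulop f *m mulop g = mulop (fun u => f u * g u).
Proof. by rewrite mulmx_diag; congr diag_mx; apply/rowP => j; rewrite !mxE. Qed.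

Lemma mulopZ k f : k *: mulop f = mulop (fun u => k * f u).
Proof. by apply/matrixP => i j; rewrite !mxE mulrnAr. Qed.

Lemma sum_mulop (I : finType) (F : I -> homu0 -> algC) :
  \sum_i mulop (F i) = mulop (fun u => \sum_i F i u).
Proof. by apply/matrixP => i j; rewrite summxE !mxE -sumrMnl; apply: eq_bigr => k _; rewrite !mxE. Qed.

Lemma mulop1 : mulop (fun=> 1) = 1%:M.
Proof. by apply/matrixP => i j; rewrite !mxE. Qed.

Lemma adj_mulop f : adj (mulop f) = mulop (fun u => (f u)^*).
Proof. by apply/matrixP => i j; rewrite !mxE rmorphMn /= eq_sym; case: eqP => // ->. Qed.

Lemma Pop_mulopC a f : (forall u, f (u + a) = f u) -> Pop a *m mulop f = mulop f *m Pop a.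
Proof.
move=> f_inv; rewrite mul_mx_diag mul_diag_mx; apply/matrixP => i j; rewrite !mxE addhE.
by have [->|] := eqVneq (bas i) (bas j + a); rewrite ?mulr0 ?mul0r // f_inv mulrC.
Qed.

Lemma Qop_mulop (Ghat : int -> finType) (chr : forall m, Ghat m -> G m -> algC) (b : homl deg Ghat 0) :
  Qop chr b = mulop (chi chr b).
Proof. by apply/matrixP => i j; rewrite !mxE mulr_natl eq_sym; case: eqP => // ->. Qed.
End Operators.

Section GaugeHolonomy.
Variables (Cell : finType) (deg : Cell -> int) (bdC : Cell -> Cell -> int).
Variables (G : int -> finZmodType) (dG : forall n : int, {additive G n -> G (n - 1)}).
Variables (Ghat : int -> finType) (chr : forall m, Ghat m -> G m -> algC).
Hypothesis chr_dual : is_dual chr.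
Local Notation dcob p q := (@Defs.dcob _ deg bdC G dG p q).
Local Notation gauge a := (Pop (dcob (-1) 0 a)).
Local Notation A := (@Aop _ deg bdC G dG Ghat chr).

Lemma Aop_fourier_proj r :
  A r = fourier_proj (@chi _ deg G Ghat chr (-1)) (fun a => gauge a) r.
Proof. by []. Qed.

Lemma gaugeD a b : gauge (a + b) = gauge a *m gauge b.
Proof. by rewrite dcobD PopM. Qed.

Lemma gauge0 : gauge 0 = 1%:M.
Proof. by rewrite dcob0 Pop0. Qed.

Lemma adj_gauge a : adj (gauge a) = gauge (- a).
Proof. by rewrite adj_Pop dcobN. Qed.

Let chim1_dual := dual_pairing_chi deg (-1) chr_dual.
Let chi1_dual := dual_pairing_chi deg 1 chr_dual.

Lemma AopM r r' : A r *m A r' = (r == r')%:R *: A r'.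
Proof. exact: (fourier_projM chim1_dual gaugeD). Qed.

Lemma adj_Aop r : adj (A r) = A r.
Proof. exact: (fourier_proj_adj chim1_dual r adj_gauge). Qed.

Lemma sum_Aop : \sum_(r : homl deg Ghat (-1)) A r = 1%:M.
Proof. exact: (sum_fourier_proj chim1_dual gauge0). Qed.

Definition holonomy_ind (w : homu deg G 1) (u : homu deg G 0) : algC := (dcob 0 1 u == w)%:R.

Variable d1 : homl deg Ghat 1 -> homl deg Ghat 0.
Hypothesis d1_dual : forall nu w, chi chr (d1 nu) w = chi chr nu (dcob 0 1 w).
Local Notation B := (@Bop _ deg G Ghat chr d1).

Lemma Bop_mulop w : B w = mulop (holonomy_ind w).
Proof.
rewrite /Bop (eq_bigr _ (fun b _ => congr1 _ (Qop_mulop chr (d1 b)))).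
under eq_bigr do rewrite mulopZ.
rewrite sum_mulop mulopZ; apply: eq_mulop => u.
under eq_bigr do rewrite d1_dual -dual_pairingN // mulrC -(chi1_dual.1 _).1.
by rewrite sum_dual_pairing // subr_eq0 (card_dual_pairing chi1_dual) natrM mulKf ?card_zmod_neq0.
Qed.

Lemma BopM w w' : B w *m B w' = (w == w')%:R *: B w'.
Proof.
rewrite !Bop_mulop mulopM mulopZ; apply: eq_mulop => u; rewrite /holonomy_ind.
by have [->|_] := eqVneq (dcob 0 1 u) w'; rewrite ?mulr1 ?mulr0 // eq_sym.
Qed.

Lemma adj_Bop w : adj (B w) = B w.
Proof. by rewrite Bop_mulop adj_mulop; apply: eq_mulop => u; rewrite conjC_nat. Qed.

Lemma sum_Bop : \sum_(w : homu deg G 1) B w = 1%:M.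
Proof.
under eq_bigr do rewrite Bop_mulop.
rewrite sum_mulop -mulop1; apply: eq_mulop => u.
by rewrite (bigD1 (dcob 0 1 u)) //= big1 ?addr0 => [|w /negbTE]; rewrite /holonomy_ind ?eqxx // eq_sym => ->.
Qed.

Hypotheses (bdC_gr : bdC_graded deg bdC) (bdC_sq : bdC_sq0 bdC) (dG_sq : dG_sq0 dG).

Lemma Aop_BopC r w : A r *m B w = B w *m A r.
Proof.
rewrite Bop_mulop Aop_fourier_proj; apply: fourier_proj_comm => a; apply: Pop_mulopC => u.
by rewrite /holonomy_ind dcobD (dcob_sq0 bdC_gr bdC_sq dG_sq (p := -1)) addr0.
Qed.
End GaugeHolonomy.

Theorem mainTheorem5
  (Cell : finType) (deg : Cell -> int) (bdC : Cell -> Cell -> int)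
  (G : int -> finZmodType) (dG : forall n : int, {additive G n -> G (n - 1)})
  (Ghat : int -> finType) (chr : forall m : int, Ghat m -> G m -> algC)
  (d1 : homl deg Ghat 1 -> homl deg Ghat 0) :
  bdC_graded deg bdC -> bdC_sq0 bdC -> dG_sq0 dG -> is_dual chr ->
  (* d1 is the dual map d_1 : hom_1 -> hom_0 of d^0 : hom^0 -> hom^1 *)
  (forall (nu : homl deg Ghat 1) (w : homu deg G 0),
      chi chr (d1 nu) w = chi chr nu (@dcob _ deg bdC G dG 0 1 w)) ->
  forall (r r' : homl deg Ghat (-1)) (w w' : homu deg G 1),
    let A := @Aop _ deg bdC G dG Ghat chr in
    let B := @Bop _ deg G Ghat chr d1 in
    [/\ A r *m B w = B w *m A r,
        @adj _ deg G (A r) = A r /\ @adj _ deg G (B w) = B w,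
        A r *m A r' = (r == r')%:R *: A r' /\ B w *m B w' = (w == w')%:R *: B w'
      & \sum_(s : homl deg Ghat (-1)) A s = 1%:M /\ \sum_(v : homu deg G 1) B v = 1%:M].
Proof.
move=> bdC_gr bdC_sq dG_sq chr_dual d1_dual r r' w w' A B.
split; last (split; [exact: sum_Aop | exact: sum_Bop]).
- exact: Aop_BopC.
- by split; [exact: adj_Aop | exact: adj_Bop].
- by split; [exact: AopM | exact: BopM].
Qed.
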